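(* Let $\Gamma$ be an Arf numerical semigroup with multiplicity sequence $(d_1,\dots,d_r)$. Then \[ E(\Gamma,2)=\min\big(\{d_i+i-1 : 1\le i\le r-1\}\cup\{r\}\big)=\min\{d_1,d_2+1,\dots,d_{r-1}+r-2,r\}. \]
   Context: A numerical semigroup is a subset $\Gamma\subseteq\mathbb N$ containing $0$, closed under addition, with finite complement; write $\Gamma=\{0=\rho_1<\rho_2<\cdots\}$, with conductor $c=\rho_r$ (least $c$ with $c+\mathbb N\subseteq\Gamma$) and genus $g=|\mathbb N\setminus\Gamma|$. $\Gamma$ is Arf if $\rho_i+\rho_j-\rho_k\in\Gamma$ for all $i\ge j\ge k$. The multiplicity sequence is $(d_1,\dots,d_r)$ with $d_i=\rho_{i+1}-\rho_i$. For $x\in\mathbb Z$ let $D_\Gamma(x)=\{s\in\Gamma:x-s\in\Gamma\}$, $D_\Gamma(x_1,x_2)=D_\Gamma(x_1)\cup D_\Gamma(x_2)$, and $\delta^2_\Gamma(m)=\min\{|D_\Gamma(m_1,m_2)|: m\le m_1<m_2,\ m_i\in\Gamma\}$. The second Feng-Rao number $E(\Gamma,2)$ is the integer (known to exist) such that $\delta^2_\Gamma(m)=m+1-2g+E(\Gamma,2)$ for all $m\ge 2c-1$; equivalently $E(\Gamma,2)=\min\{|\{s\in\Gamma: s-x\notin\Gamma\}| : 1\le x\le \rho_2\}$. *)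

From mathcomp Require Import all_boot.
Set Implicit Arguments. Unset Strict Implicit. Unset Printing Implicit Defensive.

Definition numerical_semigroup (Gamma : nat -> Prop) : Prop :=
  [/\ Gamma 0,
      (forall a b, Gamma a -> Gamma b -> Gamma (a + b)) &
      exists c, forall n, c <= n -> Gamma n].

(* rho enumerates Gamma increasingly, 1-indexed: Gamma = {rho 1 < rho 2 < ...}. *)
Definition enumerates (Gamma : nat -> Prop) (rho : nat -> nat) : Prop :=
  (forall i, 1 <= i -> rho i < rho i.+1) /\
  (forall x, Gamma x <-> exists2 i, 1 <= i & rho i = x).

Definition is_conductor (Gamma : nat -> Prop) (c : nat) : Prop :=
  (forall n, c <= n -> Gamma n) /\
  (forall c', (forall n, c' <= n -> Gamma n) -> c <= c').

(* Arf: rho_i + rho_j - rho_k in Gamma for i >= j >= k, stated on elements. *)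
Definition arf (Gamma : nat -> Prop) : Prop :=
  forall x y z, Gamma x -> Gamma y -> Gamma z -> z <= y -> y <= x ->
    Gamma (x + y - z).

Definition mult_seq (rho : nat -> nat) (i : nat) : nat := rho i.+1 - rho i.

Definition has_card (P : nat -> Prop) (k : nat) : Prop :=
  exists s : seq nat, [/\ uniq s, (forall y, y \in s <-> P y) & size s = k].

(* {s in Gamma : s - x notin Gamma}, with s - x taken in Z:
   s - x in Gamma  iff  x <= s and Gamma (s - x). *)
Definition shift_gap_set (Gamma : nat -> Prop) (x : nat) : nat -> Prop :=
  fun s => Gamma s /\ ~ (x <= s /\ Gamma (s - x)).

Definition is_E2 (Gamma : nat -> Prop) (rho : nat -> nat) (e : nat) : Prop :=
  (exists x, [/\ 1 <= x, x <= rho 2 & has_card (shift_gap_set Gamma x) e]) /\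
  (forall x k, 1 <= x -> x <= rho 2 -> has_card (shift_gap_set Gamma x) k -> e <= k).

(** Fix [1 <= x]. Every [s >= c + x] has [s - x] in [Gamma], and the [s < c + x]
    in [Gamma] with [s - x] in [Gamma] are the [m + x] with [m < c] and both [m],
    [m + x] in [Gamma]. Since [Gamma] contains all [x] numbers of [[c, c + x)]
    and its elements below [c] are [rho_1, ..., rho_(r-1)], this gives
    [|{s in Gamma : s - x notin Gamma}| = x + #{1 <= i < r : rho_i + x notin Gamma}].
    If [j] is the least index with [rho_j + x] in [Gamma], this count is at least
    [j - 1], and [j = r] or [d_j <= x]; so every value is at least the minimum.
    Conversely the Arf property gives [rho_k + d_i = rho_k + rho_(i+1) - rho_i]
    in [Gamma] for [k >= i], so [x = d_i] realises [d_i + i - 1], while [x = 1]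
    realises [r]; and [d_i <= d_1 = rho_2] because Arf multiplicity sequences
    are nonincreasing. *)

From mathcomp Require Import all_boot order.
From mathcomp Require Import zify.

Set Implicit Arguments.
Unset Strict Implicit.
Unset Printing Implicit Defensive.

Import Order.TTheory.

Lemma has_card_unique (P : nat -> Prop) k1 k2 :
  has_card P k1 -> has_card P k2 -> k1 = k2.
Proof.
move=> [s1 [uniq1 mem1 <-]] [s2 [uniq2 mem2 <-]].
by apply/eqP; rewrite eqn_leq; apply/andP; split;
  apply: uniq_leq_size => // y; [move/mem1/mem2 | move/mem2/mem1].
Qed.

Lemma count_iota_shift_gaps (g : pred nat) x L :
  count (fun n => g n && ~~ ((x <= n) && g (n - x))) (iota 0 (L + x)) =
  count g (iota L x) + count (fun m => g m && ~~ g (m + x)) (iota 0 L).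
Proof.
elim: L => [|L IH].
  rewrite add0n addn0; apply: eq_in_count => n.
  by rewrite mem_iota add0n => /andP[_ ltnx]; rewrite leqNgt ltnx andbT.
rewrite addSn -[(L + x).+1]addn1 iotaD count_cat IH -[L.+1]addn1 iotaD count_cat /=.
rewrite !add0n leq_addl addnK addn1.
have /= shift : count g (iota L x.+1) = count g (iota L x) + g (L + x).
  by rewrite -addn1 iotaD count_cat /= addn0.
by move: shift; case: (g L); case: (g (L + x)) => /=; lia.
Qed.

Lemma count_iota_prefix (p : pred nat) m n k :
  k <= n -> (forall i, m <= i < m + k -> p i) -> k <= count p (iota m n).
Proof.
move=> le_kn p_prefix; rewrite -(subnKC le_kn) iotaD count_cat.
rewrite (@eq_in_count _ _ predT) ?count_predT ?size_iota ?leq_addr //.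
by move=> i; rewrite mem_iota => /p_prefix.
Qed.

Lemma count_iota_suffix (p : pred nat) m n k :
  (forall i, m + k <= i < m + n -> ~~ p i) -> count p (iota m n) <= k.
Proof.
move=> np_suffix; have [le_kn|lt_nk] := leqP k n; last first.
  by rewrite (leq_trans (count_size _ _)) ?size_iota // ltnW.
rewrite -(subnKC le_kn) iotaD count_cat.
have -> : count p (iota (m + k) (n - k)) = 0.
  apply/eqP; rewrite -leqn0 leqNgt -has_count; apply/hasPn => i.
  by rewrite mem_iota -addnA subnKC // => /np_suffix.
by rewrite addn0 (leq_trans (count_size _ _)) ?size_iota.
Qed.

Section ArfSemigroup.

Variables (Gamma : nat -> Prop) (rho : nat -> nat) (r : nat).
Hypotheses (Gamma0 : Gamma 0) (Gamma_arf : arf Gamma)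
  (rho_enum : enumerates Gamma rho) (r_gt0 : 0 < r)
  (Gamma_conductor : forall n, rho r <= n -> Gamma n).

Local Notation c := (rho r).
Local Notation d := (mult_seq rho).

Lemma rho_mono : {in [pred i | 0 < i] &, {mono rho : i j / i <= j}}.
Proof.
apply: leq_mono_in; apply: homo_ltn_in.
- exact: ltn_trans.
- by move=> i j /= i_gt0 _ k /andP[lt_ik _]; apply: ltn_trans i_gt0 lt_ik.
- by move=> i /= i_gt0 _; apply: rho_enum.1.
Qed.

Lemma rho_leq i j : 0 < i -> 0 < j -> (rho i <= rho j) = (i <= j).
Proof. by move=> i_gt0 j_gt0; rewrite rho_mono. Qed.

Lemma rho_ltn i j : 0 < i -> 0 < j -> (rho i < rho j) = (i < j).
Proof. by move=> i_gt0 j_gt0; rewrite (leqW_mono_in rho_mono). Qed.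

Lemma Gamma_rho i : 0 < i -> Gamma (rho i).
Proof. by move=> i_gt0; apply/rho_enum.2; exists i. Qed.

Lemma rho1 : rho 1 = 0.
Proof.
have [i i_gt0 rhoi0] := (rho_enum.2 0).1 Gamma0.
by apply/eqP; rewrite -leqn0 -[X in _ <= X]rhoi0 rho_leq.
Qed.

Lemma rho_succ_le k n : 0 < k -> Gamma n -> rho k < n -> rho k.+1 <= n.
Proof.
move=> k_gt0 /rho_enum.2 [l l_gt0 <-]; rewrite !rho_ltn // => lt_kl.
by rewrite rho_leq.
Qed.

Lemma mult_seq_gt0 i : 0 < i -> 0 < d i.
Proof. by move=> i_gt0; rewrite subn_gt0 rho_ltn. Qed.

(* [2 rho_(i+1) - rho_i] lies in [Gamma] and exceeds [rho_(i+1)]. *)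
Lemma mult_seq_nonincreasing i : 0 < i -> d i.+1 <= d i.
Proof.
move=> i_gt0; have lt_i_Si : rho i < rho i.+1 by rewrite rho_ltn.
have := rho_succ_le (ltn0Sn i)
  (Gamma_arf (Gamma_rho (ltn0Sn i)) (Gamma_rho (ltn0Sn i)) (Gamma_rho i_gt0)
             (ltnW lt_i_Si) (leqnn _)).
by rewrite /mult_seq; lia.
Qed.

Lemma mult_seq_le_rho2 i : 0 < i -> d i <= rho 2.
Proof.
elim: i => [//|[_ _|i IH _]]; first by rewrite /mult_seq rho1 subn0.
exact: leq_trans (mult_seq_nonincreasing (ltn0Sn i)) (IH isT).
Qed.

Lemma Gamma_rho_add_mult_seq i k : 0 < i -> i <= k -> Gamma (rho k + d i).
Proof.
move=> i_gt0 le_ik; have le_i_Si : rho i <= rho i.+1 by rewrite rho_leq.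
rewrite /mult_seq addnBA //.
have [<-|ne_ik] := eqVneq i k; first by rewrite addKn; apply: Gamma_rho.
have k_gt0 : 0 < k by apply: leq_trans le_ik.
have lt_ik : i < k by rewrite ltn_neqAle ne_ik le_ik.
by apply: Gamma_arf; rewrite ?rho_leq //; apply: Gamma_rho.
Qed.

Definition in_Gamma m := (c <= m) || (m \in map rho (iota 1 r.-1)).

Lemma in_GammaP m : reflect (Gamma m) (in_Gamma m).
Proof.
apply: (iffP orP) => [[/Gamma_conductor //|/mapP[i]]|/rho_enum.2[i i_gt0 <-]].
  by rewrite mem_iota => /andP[i_gt0 _] ->; apply: Gamma_rho.
have [lt_ir|le_ri] := ltnP i r.
  by right; apply: map_f; rewrite mem_iota i_gt0 /=; lia.
by left; rewrite rho_leq.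
Qed.

Definition escape_count x := count (fun i => ~~ in_Gamma (rho i + x)) (iota 1 r.-1).

Lemma perm_small_elements :
  perm_eq [seq m <- iota 0 c | in_Gamma m] (map rho (iota 1 r.-1)).
Proof.
apply: uniq_perm; first by rewrite filter_uniq ?iota_uniq.
  rewrite map_inj_in_uniq ?iota_uniq // => i j.
  rewrite !mem_iota => /andP[i_gt0 _] /andP[j_gt0 _].
  exact: (incn_inj_in rho_mono).
move=> m; rewrite mem_filter mem_iota /in_Gamma add0n /=.
have [lt_mc|le_cm] := ltnP m c; first by rewrite andbT; case: leqP lt_mc.
rewrite andbF; apply/esym/negbTE/mapP => -[i].
rewrite mem_iota => /andP[i_gt0 lt_ir] eq_m.
by move: le_cm; rewrite eq_m rho_leq //; lia.
Qed.

Lemma count_small_escapes x :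
  count (fun m => in_Gamma m && ~~ in_Gamma (m + x)) (iota 0 c) = escape_count x.
Proof.
rewrite /escape_count -(count_map rho (fun m => ~~ in_Gamma (m + x))).
rewrite -(permP perm_small_elements) count_filter.
by apply: eq_count => m; rewrite /= andbC.
Qed.

Lemma has_card_shift_gap_set x :
  has_card (shift_gap_set Gamma x) (x + escape_count x).
Proof.
exists [seq n <- iota 0 (c + x) | in_Gamma n && ~~ ((x <= n) && in_Gamma (n - x))].
split.
- by rewrite filter_uniq ?iota_uniq.
- move=> y; rewrite mem_filter mem_iota add0n /shift_gap_set.
  split=> [/andP[/andP[/in_GammaP Gy gap] _]|[/in_GammaP Gy gap]].
    by split=> // -[le_xy /in_GammaP Gyx]; rewrite le_xy Gyx in gap.
  rewrite Gy /=; apply/andP; split.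
    by apply/negP => /andP[le_xy /in_GammaP Gyx]; apply: gap.
  rewrite ltnNge; apply/negP => le_cxy; apply: gap.
  by split; [lia | apply: Gamma_conductor; lia].
- rewrite size_filter count_iota_shift_gaps count_small_escapes.
  rewrite (@eq_in_count _ _ predT) ?count_predT ?size_iota //.
  by move=> n; rewrite mem_iota /in_Gamma => /andP[->].
Qed.

Local Notation e := (\big[minn/r]_(1 <= i < r) (d i + i - 1)).

Lemma E2_lower_bound x : 0 < x -> e <= x + escape_count x.
Proof.
move=> x_gt0.
have ex_j : exists j, (0 < j) && in_Gamma (rho j + x).
  by exists r; rewrite r_gt0 /in_Gamma leq_addr.
have [j /andP[j_gt0 /in_GammaP Gjx] j_min] := ex_minnP ex_j.
have le_jr : j <= r by apply: j_min; rewrite r_gt0 /in_Gamma leq_addr.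
have escapes_ge : j.-1 <= escape_count x.
  apply: count_iota_prefix => [|i /andP[i_gt0 lt_ij]]; first by lia.
  by apply/negP => Gix; have := j_min i; rewrite i_gt0 Gix => /(_ isT); lia.
have [lt_jr|eq_jr] := ltnP j r.
  have le_dx : d j <= x.
    by have := rho_succ_le j_gt0 Gjx; rewrite /mult_seq; lia.
  have e_le : e <= d j + j - 1.
    by apply: (@ge_bigmin_seq _ nat _ _ r j xpredT) => //; rewrite mem_index_iota j_gt0.
  by lia.
have e_le_r : e <= r by exact: (@bigmin_le_id _ nat).
by lia.
Qed.

Lemma E2_attained : exists2 x, 0 < x <= rho 2 & x + escape_count x <= e.
Proof.
rewrite big_seq.
apply: (big_ind (fun v => exists2 x, 0 < x <= rho 2 & x + escape_count x <= v))
  => [|a b [x x_range le_a] [y y_range le_b]|i].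
- exists 1; first by rewrite /= -rho1 rho_ltn.
  have : escape_count 1 <= r.-1 by apply: count_iota_suffix; lia.
  by lia.
- by case: leqP => _; [exists x | exists y].
- rewrite mem_index_iota => /andP[i_gt0 lt_ir].
  exists (d i); first by rewrite mult_seq_gt0 ?mult_seq_le_rho2.
  have : escape_count (d i) <= i.-1.
    apply: count_iota_suffix => k /andP[le_ik _]; apply/negPn/in_GammaP.
    by apply: Gamma_rho_add_mult_seq; lia.
  by lia.
Qed.

End ArfSemigroup.

Theorem proposition3p9 (Gamma : nat -> Prop) (rho : nat -> nat) (r : nat) :
  numerical_semigroup Gamma -> arf Gamma ->
  enumerates Gamma rho -> 1 <= r -> is_conductor Gamma (rho r) ->
  is_E2 Gamma rho (\big[minn/r]_(1 <= i < r) (mult_seq rho i + i - 1)).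
Proof.
move=> [Gamma0 _ _] Gamma_arf rho_enum r_gt0 [Gamma_conductor _].
set e := \big[minn/r]_(1 <= i < r) _.
have card := has_card_shift_gap_set rho_enum r_gt0 Gamma_conductor.
have lower := E2_lower_bound rho_enum r_gt0 Gamma_conductor.
split=> [|x k x_gt0 _ card_k]; last first.
  by rewrite -(has_card_unique (card x) card_k) lower.
have [x /andP[x_gt0 le_x_rho2] le_e] :=
  E2_attained Gamma0 Gamma_arf rho_enum r_gt0 Gamma_conductor.
exists x; split => //.
suff -> : e = x + escape_count rho r x by [].
by apply/eqP; rewrite eqn_leq le_e lower.
Qed.
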